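(* Let $s\in S(2^\infty)$ with $s^2=e$, $s\ne e$, and let $\mathrm{supp}(s)=\{x\in X: s(x)\neq x\}$. Then in $G=S(2^\infty)\ltimes \widetilde C(X;\mathbb{Z}_2)$, $$\mathrm{fpc}(s)=\{e,\ s,\ \widetilde f_{\mathrm{supp}(s)},\ s\widetilde f_{\mathrm{supp}(s)}\}.$$
   Context: For a group $G$ and $g\in G$, $C_G(g)$ is the centralizer of $g$ and $\mathrm{fpc}(g)=\{h\in G:\ \{t^{-1}ht: t\in C_G(g)\}\text{ is finite}\}$. For $n\ge1$ let $S(2^n)$ be the symmetric group of the finite set $\{0,1\}^n$, embedded in $S(2^{n+1})$ via $s\mapsto\tilde s$, $\tilde s(x,y)=(s(x),y)$ ($x\in\{0,1\}^n$, $y\in\{0,1\}$); $S(2^\infty)=\bigcup_n S(2^n)$. Let $X=\{0,1\}^{\mathbb N}$; $S(2^\infty)$ acts on $X$ by homeomorphisms via $s(x,y)=(s(x),y)$ for $s\in S(2^n)$, $x\in\{0,1\}^n$, $y\in\{0,1\}^{\mathbb N}$. $C(X;\mathbb Z_2)$ is the abelian group of continuous maps $X\to\mathbb Z_2$ under pointwise addition; its elements are $f_A=\mathbf 1_A$ for clopen $A\subseteq X$, with $f_Af_B=f_{A\triangle B}$. $S(2^\infty)$ acts by $g\cdot f_A=f_{g(A)}$. The constant functions $\{f_\emptyset,f_X\}$ form an invariant subgroup and $\widetilde C(X;\mathbb Z_2)$ is the quotient group; $\widetilde f_A$ denotes the class of $f_A$ (so $\widetilde f_A=\widetilde f_{X\setminus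 A}$). $G=S(2^\infty)\ltimes\widetilde C(X;\mathbb Z_2)$, with $g\widetilde f_Ag^{-1}=\widetilde f_{g(A)}$. *)

From Stdlib Require Import ClassicalEpsilon.
From mathcomp Require Import all_boot all_fingroup.
Set Implicit Arguments. Unset Strict Implicit. Unset Printing Implicit Defensive.

Definition X := nat -> bool.

Definition prefix (n : nat) (x : X) : {ffun 'I_n -> bool} := [ffun i : 'I_n => x i].

(* action on X of p in S(2^n): p(x,y) = (p(x),y) *)
Definition perm_act (n : nat) (p : {perm {ffun 'I_n -> bool}}) (x : X) : X :=
  fun i => match @insub nat (fun k => k < n) 'I_n i with
           | Some j => p (prefix n x) j
           | None => x i
           end.

(* s : X -> X is (the action of) an element of S(2^oo) = \bigcup_n S(2^n) *)
Definition in_S2inf (s : X -> X) : Prop :=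
  exists n (p : {perm {ffun 'I_n -> bool}}), forall x, s x = perm_act p x.

(* A : X -> bool is the indicator of a clopen subset of X
   (clopens of the Cantor space = finite unions of cylinders) *)
Definition clopen (A : X -> bool) : Prop :=
  exists n (B : {set {ffun 'I_n -> bool}}), forall x, A x = (prefix n x \in B).

(* Elements of G = S(2^oo) |x C~(X;Z2), written s * f~_A *)
Record Gelt := mkG { gs : X -> X ; gA : X -> bool }.

Definition inG (g : Gelt) : Prop := in_S2inf (gs g) /\ clopen (gA g).

(* equality in G: same permutation, and f~_A = f~_B iff B = A or B = X \ A *)
Definition Geq (g h : Gelt) : Prop :=
  (forall x, gs g x = gs h x) /\
  ((forall x, gA g x = gA h x) \/ (forall x, gA g x = ~~ gA h x)).

(* (s f_A)(t f_B) = (st) (t^{-1} f_A t) f_B = (st) f_{t^{-1}(A) \triangle B} *)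
Definition gmul (g h : Gelt) : Gelt :=
  mkG (fun x => gs g (gs h x)) (fun x => addb (gA g (gs h x)) (gA h x)).

Definition gone : Gelt := mkG (fun x => x) (fun _ => false).
Definition gperm (s : X -> X) : Gelt := mkG s (fun _ => false).
Definition gfun (A : X -> bool) : Gelt := mkG (fun x => x) A.

Definition gfinite (P : Gelt -> Prop) : Prop :=
  exists l : seq Gelt, forall k, P k -> exists2 k', List.In k' l & Geq k k'.

Definition centralizes (g t : Gelt) : Prop := inG t /\ Geq (gmul t g) (gmul g t).

(* k = t^{-1} h t, i.e. t k = h t *)
Definition fpc (g h : Gelt) : Prop :=
  inG h /\
  gfinite (fun k => inG k /\ exists t, centralizes g t /\ Geq (gmul t k) (gmul h t)).

Definition supp (s : X -> X) : X -> bool :=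
  fun x => if excluded_middle_informative (s x <> x) then true else false.

(* If h = p f~_B lies in fpc(s), its conjugates under C_G(s) form a finite set, so any sequence
   of such conjugates repeats up to equality in G. Take N so large that s, p and B only look at
   the first N coordinates, and use two families of involutions of C_G(s), the j-th member acting
   only on the cylinder {x | x_(N+j) = 1}: multiplication by f~_A for s-invariant cylinders A,
   and the map applying on that cylinder an involution tau of {0,1}^N commuting with s. A
   repetition in the first family forces p to fix or swap every pair {w, s w}; one in the second
   forces p and B to be invariant under every such tau. These tau act transitively on the fixed
   points and on the moved points of s, so p is e or s and B is constant on supp(s) and on its
   complement. Conversely the four elements commute with every element of C_G(s), so each is its
   only conjugate under C_G(s). *)

From Stdlib Require Import Classical ClassicalEpsilon FunctionalExtensionality.
From mathcomp Require Import all_boot all_fingroup.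
Set Implicit Arguments. Unset Strict Implicit. Unset Printing Implicit Defensive.

Notation word n := {ffun 'I_n -> bool}.

Definition act_prefix n (f : word n -> word n) (x : X) : X :=
  fun i => match @insub nat (fun k => k < n) 'I_n i with
           | Some j => f (prefix n x) j
           | None => x i
           end.

Definition pad0 n (u : word n) : X :=
  fun i => match @insub nat (fun k => k < n) 'I_n i with
           | Some j => u j
           | None => false
           end.

Lemma perm_actE n (p : {perm word n}) x : perm_act p x = act_prefix p x.
Proof. by []. Qed.

Section Prefixes.
Variable n : nat.
Implicit Types (x y : X) (f g : word n -> word n) (u : word n).

Lemma insub_ord (j : 'I_n) : @insub nat (fun k => k < n) 'I_n j = Some j.
Proof. exact: valK. Qed.

Lemma insub_geq i : n <= i -> @insub nat (fun k => k < n) 'I_n i = None.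
Proof. by move=> le_ni; apply: insubF; rewrite ltnNge le_ni. Qed.

Lemma eq_prefixP x y : prefix n x = prefix n y <-> forall i, i < n -> x i = y i.
Proof.
split=> [exy i lt_in|exy]; last by apply/ffunP => j; rewrite !ffunE exy.
by have := congr1 (fun u => u (Ordinal lt_in)) exy; rewrite !ffunE.
Qed.

Lemma prefix_bit x y i : prefix n x = prefix n y -> i < n -> x i = y i.
Proof. by move/eq_prefixP; apply. Qed.

Lemma eq_from_prefix x y :
  prefix n x = prefix n y -> (forall i, n <= i -> x i = y i) -> x = y.
Proof.
move=> /eq_prefixP exy tail; apply: functional_extensionality => i.
by case: (ltnP i n) => [/exy|/tail].
Qed.

Lemma prefix_act f x : prefix n (act_prefix f x) = f (prefix n x).
Proof. by apply/ffunP => j; rewrite ffunE /act_prefix insub_ord. Qed.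

Lemma act_prefix_tail f x i : n <= i -> act_prefix f x i = x i.
Proof. by move=> le_ni; rewrite /act_prefix insub_geq. Qed.

Lemma act_prefix_bit f x j : act_prefix f x (n + j) = x (n + j).
Proof. by rewrite act_prefix_tail ?leq_addr. Qed.

Lemma prefix_pad0 u : prefix n (pad0 u) = u.
Proof. by apply/ffunP => j; rewrite ffunE /pad0 insub_ord. Qed.

Lemma pad0_tail u i : n <= i -> pad0 u i = false.
Proof. by move=> le_ni; rewrite /pad0 insub_geq. Qed.

Lemma pad0_bit u j : pad0 u (n + j) = false.
Proof. by rewrite pad0_tail ?leq_addr. Qed.

Lemma eq_act_prefix f g x : f =1 g -> act_prefix f x = act_prefix g x.
Proof. by move=> fg; apply: eq_from_prefix => [|i le_ni]; rewrite ?prefix_act ?act_prefix_tail. Qed.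

Lemma act_prefix_id x : act_prefix (@id (word n)) x = x.
Proof. by apply: eq_from_prefix => [|i le_ni]; rewrite ?prefix_act ?act_prefix_tail. Qed.

Lemma act_prefix_comp f g x : act_prefix f (act_prefix g x) = act_prefix (f \o g) x.
Proof. by apply: eq_from_prefix => [|i le_ni]; rewrite ?prefix_act ?act_prefix_tail. Qed.

Lemma act_prefixK f : involutive f -> involutive (act_prefix f).
Proof. by move=> fK x; rewrite act_prefix_comp (eq_act_prefix _ fK) act_prefix_id. Qed.

Lemma act_prefix_fixed f x : act_prefix f x = x <-> f (prefix n x) = prefix n x.
Proof.
split=> [fx|fx]; first by rewrite -{2}fx prefix_act.
by apply: eq_from_prefix => [|i le_ni]; rewrite ?prefix_act ?act_prefix_tail.
Qed.

End Prefixes.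

Lemma prefix_leq m n x y : m <= n -> prefix n x = prefix n y -> prefix m x = prefix m y.
Proof.
move=> le_mn /eq_prefixP exy; apply/eq_prefixP => i lt_im.
exact/exy/(leq_trans lt_im).
Qed.

Definition acts_below n (f : X -> X) :=
  (forall x i, n <= i -> f x i = x i) /\
  (forall x y, prefix n x = prefix n y -> prefix n (f x) = prefix n (f y)).

Definition depends_below n (A : X -> bool) :=
  forall x y, prefix n x = prefix n y -> A x = A y.

Lemma acts_below_act_prefix n (f : word n -> word n) : acts_below n (act_prefix f).
Proof. by split=> [x i|x y exy]; [exact: act_prefix_tail | rewrite !prefix_act exy]. Qed.

Lemma eq_acts_below n f g : f =1 g -> acts_below n g -> acts_below n f.
Proof. by move=> fg [gtail gpre]; split=> [x i|x y]; rewrite !fg; [exact: gtail | exact: gpre]. Qed.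

Lemma acts_below_leq m n f : m <= n -> acts_below m f -> acts_below n f.
Proof.
move=> le_mn [ftail fpre]; split=> [x i le_ni|x y exy].
  exact/ftail/(leq_trans le_mn).
apply/eq_prefixP => i lt_in; have [lt_im|le_mi] := ltnP i m.
  exact: prefix_bit (fpre _ _ (prefix_leq le_mn exy)) lt_im.
by rewrite !ftail //; apply: prefix_bit exy lt_in.
Qed.

Lemma acts_below_comp n f g : acts_below n f -> acts_below n g -> acts_below n (f \o g).
Proof.
move=> [ftail fpre] [gtail gpre].
by split=> [x i le_ni|x y exy] /=; [rewrite ftail ?gtail | apply/fpre/gpre].
Qed.

Lemma act_prefix_of_acts_below n f :
  acts_below n f -> f =1 act_prefix (fun u => prefix n (f (pad0 u))).
Proof.
move=> [ftail fpre] x; apply: (@eq_from_prefix n).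
  by rewrite prefix_act; apply: fpre; rewrite prefix_pad0.
by move=> i le_ni; rewrite act_prefix_tail // ftail.
Qed.

Lemma acts_below_in_S2inf n f : acts_below n f -> injective f -> in_S2inf f.
Proof.
move=> fn fI; pose p (u : word n) := prefix n (f (pad0 u)).
have pI : injective p.
  move=> u v puv; rewrite -(prefix_pad0 u) -(prefix_pad0 v); congr (prefix n _).
  apply: fI; apply: (@eq_from_prefix n) => // i le_ni.
  by rewrite !fn.1 // !pad0_tail.
exists n, (perm pI) => x; rewrite perm_actE (act_prefix_of_acts_below fn x).
by apply: eq_act_prefix => u; rewrite permE.
Qed.

Lemma in_S2inf_acts_below f : in_S2inf f -> exists n, acts_below n f.
Proof. by move=> [n [p fp]]; exists n; apply: eq_acts_below fp (acts_below_act_prefix p). Qed.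

Lemma in_S2inf_inj f : in_S2inf f -> injective f.
Proof.
move=> [n [p fp]] x y; rewrite !fp !perm_actE => exy.
apply: (@eq_from_prefix n) => [|i le_ni].
  by apply: (@perm_inj _ p); rewrite -!prefix_act exy.
by rewrite -(act_prefix_tail p x le_ni) -(act_prefix_tail p y le_ni) exy.
Qed.

Lemma in_S2inf_id : in_S2inf id.
Proof. by apply: (@acts_below_in_S2inf 0) => //; split. Qed.

Lemma depends_below_leq m n A : m <= n -> depends_below m A -> depends_below n A.
Proof. by move=> le_mn Am x y /(prefix_leq le_mn); apply: Am. Qed.

Lemma depends_below_comp n f A :
  acts_below n f -> depends_below n A -> depends_below n (A \o f).
Proof. by move=> [_ fpre] An x y /fpre; apply: An. Qed.

Lemma depends_below_clopen n A : depends_below n A -> clopen A.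
Proof.
by move=> An; exists n, [set u | A (pad0 u)] => x; rewrite inE; apply: An; rewrite prefix_pad0.
Qed.

Lemma clopen_depends_below A : clopen A -> exists n, depends_below n A.
Proof. by move=> [n [B AB]]; exists n => x y exy; rewrite !AB exy. Qed.

Lemma clopen_const b : clopen (fun _ => b).
Proof. exact: (@depends_below_clopen 0). Qed.

Lemma in_S2inf_comp f g : in_S2inf f -> in_S2inf g -> in_S2inf (f \o g).
Proof.
move=> fS gS; have [m fm] := in_S2inf_acts_below fS; have [n gn] := in_S2inf_acts_below gS.
apply: (@acts_below_in_S2inf (maxn m n)).
  by apply: acts_below_comp; [apply: acts_below_leq fm | apply: acts_below_leq gn];
    rewrite ?leq_maxl ?leq_maxr.
exact: inj_comp (in_S2inf_inj fS) (in_S2inf_inj gS).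
Qed.

Lemma clopen_comp f A : in_S2inf f -> clopen A -> clopen (A \o f).
Proof.
move=> fS AC; have [m fm] := in_S2inf_acts_below fS; have [n An] := clopen_depends_below AC.
apply: (@depends_below_clopen (maxn m n)); apply: depends_below_comp.
  exact: acts_below_leq (leq_maxl m n) fm.
exact: depends_below_leq (leq_maxr m n) An.
Qed.

Lemma clopen_addb A B : clopen A -> clopen B -> clopen (fun x => addb (A x) (B x)).
Proof.
move=> AC BC; have [m Am] := clopen_depends_below AC; have [n Bn] := clopen_depends_below BC.
apply: (@depends_below_clopen (maxn m n)) => x y exy.
by rewrite (depends_below_leq (leq_maxl m n) Am exy) (depends_below_leq (leq_maxr m n) Bn exy).
Qed.

Lemma inG_mul g h : inG g -> inG h -> inG (gmul g h).
Proof.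
move=> [gS gC] [hS hC]; split; first exact: in_S2inf_comp.
by apply: clopen_addb => //; apply: clopen_comp.
Qed.

Lemma GeqE g h :
  Geq g h <-> (forall x, gs g x = gs h x) /\ exists c, forall x, gA g x = addb (gA h x) c.
Proof.
split=> [[gh [AB|AB]]|[gh [[] AB]]]; split=> //.
- by exists false => x; rewrite AB addbF.
- by exists true => x; rewrite AB addbT.
- by right=> x; rewrite AB addbT.
- by left=> x; rewrite AB addbF.
Qed.

Lemma Geq_sym g h : Geq g h -> Geq h g.
Proof.
move=> /GeqE [gh [c AB]]; apply/GeqE; split=> [x|]; first by rewrite gh.
by exists c => x; rewrite AB -addbA addbb addbF.
Qed.

Lemma Geq_trans g h k : Geq g h -> Geq h k -> Geq g k.
Proof.
move=> /GeqE [gh [c AB]] /GeqE [hk [d BC]]; apply/GeqE; split=> [x|].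
  by rewrite gh hk.
by exists (addb d c) => x; rewrite AB BC addbA.
Qed.

Lemma Geq_mulr g h t : Geq g h -> Geq (gmul g t) (gmul h t).
Proof.
move=> /GeqE [gh [c AB]]; apply/GeqE; split=> [x|] /=; first by rewrite gh.
by exists c => x; rewrite AB -!addbA (addbC c).
Qed.

Lemma Geq_mull_cancel t k h : injective (gs t) -> Geq (gmul t k) (gmul t h) -> Geq k h.
Proof.
move=> tI /GeqE [/= tkh [c A]]; have kh x : gs k x = gs h x by apply: tI.
apply/GeqE; split=> //; exists c => x; move: (A x) => /=; rewrite kh.
by rewrite -addbA => /addbI.
Qed.

Lemma Geq_pigeonhole (l : seq Gelt) (F : nat -> Gelt) :
  (forall j, exists2 k, List.In k l & Geq (F j) k) ->
  exists i j, i <> j /\ Geq (F i) (F j).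
Proof.
elim: l F => [|a l IHl] F Fl; first by case: (Fl 0).
have [[i [j [ij [Fia Fja]]]]|no2] :=
  classic (exists i j, i <> j /\ Geq (F i) a /\ Geq (F j) a).
  by exists i, j; split=> //; apply: Geq_trans Fia (Geq_sym Fja).
have [[j0 Fj0]|no1] := classic (exists j0, Geq (F j0) a).
  have [j|i [j [ij Fij]]] := IHl (F \o bump j0).
    have [k /= [<-|kl] Fk] := Fl (bump j0 j); last by exists k.
    by case: no2; exists j0, (bump j0 j); do !split=> //; apply/eqP; exact: neq_bump.
  by exists (bump j0 i), (bump j0 j); split=> // /(can_inj (bumpK j0)).
apply: IHl => j; have [k /= [<-|kl] Fk] := Fl j; last by exists k.
by case: no1; exists j.
Qed.

(* [gconj t h] is the conjugate t^-1 h t only when t is an involution. *)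
Definition gconj t h := gmul (gmul t h) t.

Lemma Geq_conj_involution t h :
  Geq (gmul t t) gone -> Geq (gmul t (gconj t h)) (gmul h t).
Proof.
move=> /GeqE [/= tK [c tA]]; apply/GeqE; split=> [x|] /=; first by rewrite tK.
exists c => x; move: (tA (gs h (gs t x))) => /=.
by rewrite !addbA => ->; rewrite -addbA addbC.
Qed.

Lemma fpc_conj_collision g h (t : nat -> Gelt) :
  fpc g h -> (forall j, centralizes g (t j)) -> (forall j, Geq (gmul (t j) (t j)) gone) ->
  exists i j, i <> j /\ Geq (gconj (t i) h) (gconj (t j) h).
Proof.
move=> [hG [l fin]] tC tK; apply: (@Geq_pigeonhole l) => j; apply: fin; split.
  by have tG := (tC j).1; apply: inG_mul => //; apply: inG_mul.
by exists (t j); split; [exact: tC | exact: Geq_conj_involution].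
Qed.

Lemma supp_neq s x : s x <> x -> supp s x.
Proof. by rewrite /supp; case: excluded_middle_informative. Qed.

Lemma supp_eq s x : s x = x -> supp s x = false.
Proof. by rewrite /supp; case: excluded_middle_informative. Qed.

Lemma supp_commute s t x :
  injective t -> (forall x, t (s x) = s (t x)) -> supp s (t x) = supp s x.
Proof.
move=> tI ts; have [sx|sx] := classic (s x = x).
  by rewrite !supp_eq // -ts sx.
by rewrite !supp_neq // -ts => /tI.
Qed.

Lemma centralizes_gperm s t : centralizes (gperm s) t ->
  (forall x, gs t (s x) = s (gs t x)) /\ exists c, forall x, gA t (s x) = addb (gA t x) c.
Proof. by move=> [_ /GeqE [ts [c tA]]]; split=> //; exists c => x; rewrite -tA /= addbF. Qed.

Lemma fpc_of_commuting g h0 h : inG h -> Geq h h0 ->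
  (forall t, centralizes g t -> Geq (gmul h0 t) (gmul t h0)) -> fpc g h.
Proof.
move=> hG hh0 h0C; split=> //; exists [:: h0] => k [_ [t [tC tk]]]; exists h0; first by left.
apply: (Geq_mull_cancel (in_S2inf_inj tC.1.1)).
exact: Geq_trans tk (Geq_trans (Geq_mulr t hh0) (h0C t tC)).
Qed.

Lemma fpc_of_supp_cases s h : inG h ->
  Geq h gone \/ Geq h (gperm s) \/ Geq h (gfun (supp s)) \/
  Geq h (gmul (gperm s) (gfun (supp s))) -> fpc (gperm s) h.
Proof.
move=> hG; case=> [|[|[|]]] hh0; apply: (fpc_of_commuting hG hh0) => t tC;
  have [ts [c tA]] := centralizes_gperm tC;
  have tsupp x : supp s (gs t x) = supp s x := supp_commute x (in_S2inf_inj tC.1.1) ts;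
  apply/GeqE; split=> [x|] /=; rewrite ?ts //.
- by exists false => x; rewrite !addbF.
- by exists c => x; rewrite tA addbF -addbA addbb addbF.
- by exists false => x; rewrite tsupp addbF addbC.
- exists c => x; rewrite tsupp tA.
  by move: {tA} c (supp s x) (gA t x) => [] [] [].
Qed.

Lemma inj_tperm (T : finType) (f : T -> T) : injective f ->
  forall a b w, f (tperm a b w) = tperm (f a) (f b) (f w).
Proof.
move=> fI a b w; case: tpermP => [->|->|/eqP aw /eqP bw]; rewrite ?tpermL ?tpermR //.
by rewrite tpermD // (inj_eq fI) eq_sym.
Qed.

Lemma tperm_commute (T : finType) (a b c d w : T) :
  a != c -> a != d -> b != c -> b != d ->
  tperm a b (tperm c d w) = tperm c d (tperm a b w).
Proof.
move=> ac ad bc bd; case: (tpermP c d w) => [->|->|/eqP cw /eqP dw].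
- by rewrite (tpermD ac bc) tpermL tpermD.
- by rewrite (tpermD ad bd) tpermR tpermD.
by case: (tpermP a b w) => [wa|wb|_ _]; rewrite ?wa ?wb tpermD // eq_sym.
Qed.

Section CommutingInvolutions.
Variables (T : finType) (sg : T -> T).
Hypothesis sgK : involutive sg.

Definition commuting_involution (tau : T -> T) :=
  involutive tau /\ forall w, tau (sg w) = sg (tau w).

Let sgI := inv_inj sgK.

Lemma commuting_tperm_fixed u v : sg u = u -> sg v = v -> commuting_involution (tperm u v).
Proof. by move=> su sv; split=> [|w]; [exact: tpermK | rewrite inj_tperm // su sv]. Qed.

Lemma commuting_tperm_orbit u : commuting_involution (tperm u (sg u)).
Proof. by split=> [|w]; [exact: tpermK | rewrite inj_tperm // sgK tpermC]. Qed.

Lemma commuting_double_tperm u v : sg u != u -> sg v != v -> v != sg u ->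
  commuting_involution (fun w => tperm (sg u) (sg v) (tperm u v w)).
Proof.
move=> su sv vsu; have usv : u != sg v by rewrite -(inj_eq sgI) sgK eq_sym.
have C w : tperm u v (tperm (sg u) (sg v) w) = tperm (sg u) (sg v) (tperm u v w).
  by apply: tperm_commute; rewrite // eq_sym.
by split=> w; [rewrite -C !tpermK | rewrite !(inj_tperm sgI) !sgK C].
Qed.

Lemma commuting_involution_moved u v : sg u != u -> sg v != v ->
  exists2 tau, commuting_involution tau & tau u = v.
Proof.
move=> su sv; have [->|vsu] := eqVneq v (sg u).
  by exists (tperm u (sg u)); [exact: commuting_tperm_orbit | exact: tpermL].
exists (fun w => tperm (sg u) (sg v) (tperm u v w)); first exact: commuting_double_tperm.
by rewrite tpermL tpermD // eq_sym.
Qed.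

Lemma commuting_involution_fixed u v : sg u = u -> sg v = v ->
  exists2 tau, commuting_involution tau & tau u = v.
Proof. by move=> su sv; exists (tperm u v); [exact: commuting_tperm_fixed | exact: tpermL]. Qed.

Lemma commuting_invariant_perm (pi : T -> T) :
  (forall w, pi w = w \/ pi w = sg w) ->
  (forall tau, commuting_involution tau -> forall w, tau (pi (tau w)) = pi w) ->
  (forall w, pi w = w) \/ (forall w, pi w = sg w).
Proof.
move=> piw piJ; have [[u [pu su]]|no] := classic (exists u, pi u = sg u /\ sg u != u).
  right=> w; have [sw|sw] := eqVneq (sg w) w; first by case: (piw w) => ->.
  have [tau tauJ tw] := commuting_involution_moved sw su.
  have tu : tau u = w by rewrite -tw tauJ.1.
  by rewrite -(piJ tau tauJ) tw pu tauJ.2 tu.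
left=> w; have [//|pw] := piw w; have [sw|sw] := eqVneq (sg w) w; first by rewrite pw sw.
by case: no; exists w.
Qed.

Lemma commuting_invariant_fun (rT : Type) (B : T -> rT) :
  (forall tau, commuting_involution tau -> forall w, B (tau w) = B w) ->
  forall u v, (sg u == u) = (sg v == v) -> B u = B v.
Proof.
move=> BJ u v; have [su|su] := eqVneq (sg u) u; have [sv|sv] := eqVneq (sg v) v => // _.
  by have [tau tauJ <-] := commuting_involution_fixed su sv; rewrite BJ.
by have [tau tauJ <-] := commuting_involution_moved su sv; rewrite BJ.
Qed.

End CommutingInvolutions.

Definition mark n (w : word n) j : X := fun k => (k == n + j) || pad0 w k.

Lemma prefix_mark n (w : word n) j : prefix n (mark w j) = w.
Proof.
rewrite -{2}(prefix_pad0 w); apply/eq_prefixP => k lt_kn.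
by rewrite /mark ltn_eqF // (leq_trans lt_kn) ?leq_addr.
Qed.

Lemma mark_bit n (w : word n) i j : mark w i (n + j) = (i == j).
Proof. by rewrite /mark eqn_add2l pad0_bit orbF eq_sym. Qed.

Definition cond_act n (tau : word n -> word n) j (x : X) : X :=
  if x (n + j) then act_prefix tau x else x.

Section CondAct.
Variables (n : nat) (tau : word n -> word n) (j : nat).
Implicit Type x : X.

Lemma cond_act_true x : x (n + j) -> cond_act tau j x = act_prefix tau x.
Proof. by rewrite /cond_act => ->. Qed.

Lemma cond_act_false x : x (n + j) = false -> cond_act tau j x = x.
Proof. by rewrite /cond_act => ->. Qed.

Lemma cond_actK : involutive tau -> involutive (cond_act tau j).
Proof.
move=> tauK x; have [xj|/negbTE xj] := boolP (x (n + j)); last by rewrite !cond_act_false.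
by rewrite (cond_act_true xj) cond_act_true ?act_prefix_bit //; exact: act_prefixK.
Qed.

Lemma cond_act_commute (sg : word n -> word n) x : (forall u, tau (sg u) = sg (tau u)) ->
  cond_act tau j (act_prefix sg x) = act_prefix sg (cond_act tau j x).
Proof.
move=> tauC; rewrite /cond_act act_prefix_bit; case: (x (n + j)) => //.
by rewrite !act_prefix_comp; apply: eq_act_prefix => u /=.
Qed.

Lemma acts_below_cond_act : acts_below (n + j).+1 (cond_act tau j).
Proof.
have [atail apre] := acts_below_leq (leqW (leq_addr j n)) (acts_below_act_prefix tau).
split=> [x i le_i|x y exy]; rewrite /cond_act; first by case: ifP => // _; apply: atail.
by rewrite (prefix_bit exy (ltnSn _)); case: ifP => // _; apply: apre.
Qed.

Lemma in_S2inf_cond_act : involutive tau -> in_S2inf (cond_act tau j).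
Proof.
by move=> tauK; apply: acts_below_in_S2inf acts_below_cond_act (inv_inj (cond_actK tauK)).
Qed.

End CondAct.

Section ConjugateFamilies.
Variables (s : X -> X) (h : Gelt) (N : nat) (sg pi : word N -> word N).
Hypotheses (s_act : forall x, s x = act_prefix sg x) (sgK : involutive sg).
Hypotheses (h_act : forall x, gs h x = act_prefix pi x) (hB : depends_below N (gA h)).
Hypothesis h_fpc : fpc (gperm s) h.

Lemma fpc_perm_fixes_or_swaps w : pi w = w \/ pi w = sg w.
Proof.
apply: NNPP => /not_or_and [/eqP/negbTE pw /eqP/negbTE psw].
pose A j x := x (N + j) && ((prefix N x == w) || (prefix N x == sg w)).
have A_local j : depends_below (N + j).+1 (A j).
  move=> x y exy; rewrite /A (prefix_bit exy (ltnSn _)).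
  by rewrite (prefix_leq _ exy) // leqW // leq_addr.
have As j x : A j (s x) = A j x.
  by rewrite /A s_act act_prefix_bit prefix_act (inv_eq sgK) (inj_eq (inv_inj sgK)) orbC.
have [i [j [/eqP/negbTE ij /GeqE [_ [c hA]]]]] :
    exists i j, i <> j /\ Geq (gconj (gfun (A i)) h) (gconj (gfun (A j)) h).
  apply: fpc_conj_collision h_fpc _ _ => j.
    split; first by split; [exact: in_S2inf_id | exact: depends_below_clopen (A_local j)].
    by apply/GeqE; split=> //=; exists false => x; rewrite As.
  by apply/GeqE; split=> //=; exists false => x; rewrite addbb.
have A_h k x : A k (gs h x) =
    x (N + k) && ((pi (prefix N x) == w) || (pi (prefix N x) == sg w)).
  by rewrite /A h_act act_prefix_bit prefix_act.
(* At [mark w i] only [A i] is on, and [A i] is off after [gs h] since pi w is not in {w, sg w}. *)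
move: (hA (pad0 w)) (hA (mark w i)) => /= {hA}; rewrite !A_h /A !pad0_bit !mark_bit.
rewrite prefix_mark pw psw ij !eqxx /=.
by case: c; case: (gA h (pad0 w)); case: (gA h (mark w i)).
Qed.

Lemma fpc_commuting_involution_invariant tau : commuting_involution sg tau ->
  forall w, tau (pi (tau w)) = pi w /\ gA h (pad0 (tau w)) = gA h (pad0 w).
Proof.
move=> [tauK tauC] w; pose t j := gperm (cond_act tau j).
have [i [j [ij /GeqE [hs [c hA]]]]] :
    exists i j, i <> j /\ Geq (gconj (t i) h) (gconj (t j) h).
  apply: fpc_conj_collision h_fpc _ _ => j.
    split; first by split; [exact: in_S2inf_cond_act | exact: clopen_const].
    by apply/GeqE; split=> [x|] /=; [rewrite !s_act cond_act_commute | exists false].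
  by apply/GeqE; split=> [x|] /=; [exact: cond_actK | exists false].
have bi : mark w i (N + i) by rewrite mark_bit eqxx.
have bj : mark w i (N + j) = false by rewrite mark_bit; apply/eqP.
(* At [mark w i] the i-th conjugate is h twisted by tau, the j-th one is h itself. *)
split.
  move: (congr1 (prefix N) (hs (mark w i))) => /=.
  rewrite (cond_act_true _ bi) (cond_act_false _ bj) !h_act.
  rewrite cond_act_true ?act_prefix_bit // cond_act_false ?act_prefix_bit //.
  by rewrite !prefix_act prefix_mark.
move: (hA (pad0 w)) (hA (mark w i)) => /= {hA}.
rewrite !(cond_act_false _ (pad0_bit w _)) (cond_act_true _ bi) (cond_act_false _ bj).
rewrite (@hB (act_prefix tau _) (pad0 (tau w))) ?prefix_act ?prefix_mark ?prefix_pad0 //.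
rewrite (@hB (mark w i) (pad0 w)) ?prefix_mark ?prefix_pad0 //.
by case: c; case: (gA h (pad0 w)); case: (gA h (pad0 (tau w))).
Qed.

End ConjugateFamilies.

Lemma inG_prefix_form s h : in_S2inf s -> inG h ->
  exists N (sg pi : word N -> word N), [/\ forall x, s x = act_prefix sg x,
    forall x, gs h x = act_prefix pi x & depends_below N (gA h)].
Proof.
move=> sS [hS hC]; have [n1 s1] := in_S2inf_acts_below sS.
have [n2 h2] := in_S2inf_acts_below hS; have [n3 B3] := clopen_depends_below hC.
pose N := maxn n1 (maxn n2 n3).
have le1 : n1 <= N := leq_maxl _ _.
have le2 : n2 <= N by rewrite /N maxnCA leq_maxl.
have le3 : n3 <= N by rewrite /N maxnA leq_maxr.
exists N; do 2 eexists; split.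
- exact: act_prefix_of_acts_below (acts_below_leq le1 s1).
- exact: act_prefix_of_acts_below (acts_below_leq le2 h2).
exact: depends_below_leq le3 B3.
Qed.

Lemma supp_two_valued (rT : Type) s (B : X -> rT) x0 : s x0 <> x0 ->
  (forall x y, (s x = x <-> s y = y) -> B x = B y) ->
  exists b0, forall x, B x = if supp s x then B x0 else b0.
Proof.
move=> sx0 Bs; have moved x : s x <> x -> B x = B x0.
  by move=> sx; apply: Bs; split=> [/sx []|/sx0 []].
have [[y0 sy0]|nofix] := classic (exists y0, s y0 = y0).
  exists (B y0) => x; have [sx|sx] := classic (s x = x).
    by rewrite supp_eq //; apply: Bs.
  by rewrite supp_neq // moved.
exists (B x0) => x; have sx : s x <> x by move=> sx; apply: nofix; exists x.
by rewrite supp_neq // moved.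
Qed.

Lemma Geq_supp_cases s h b0 b1 :
  (forall x, gs h x = x) \/ (forall x, gs h x = s x) ->
  (forall x, gA h x = if supp s x then b1 else b0) ->
  Geq h gone \/ Geq h (gperm s) \/ Geq h (gfun (supp s)) \/
  Geq h (gmul (gperm s) (gfun (supp s))).
Proof.
move=> hs hA; have [b10|b10] := eqVneq b1 b0; case: hs => hs.
- by left; apply/GeqE; split=> //; exists b0 => x; rewrite hA b10 if_same.
- by right; left; apply/GeqE; split=> //; exists b0 => x; rewrite hA b10 if_same.
- do 2 right; left; apply/GeqE; split=> //; exists b0 => x /=.
  by rewrite hA; move: b10 {hA}; case: (supp s x); case: b1; case: b0.
- do 3 right; apply/GeqE; split=> //; exists b0 => x /=.
  by rewrite hA; move: b10 {hA}; case: (supp s x); case: b1; case: b0.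
Qed.

Lemma fpc_supp_cases s h : in_S2inf s -> involutive s -> (exists x, s x <> x) ->
  inG h -> fpc (gperm s) h ->
  Geq h gone \/ Geq h (gperm s) \/ Geq h (gfun (supp s)) \/
  Geq h (gmul (gperm s) (gfun (supp s))).
Proof.
move=> sS sK [x0 sx0] hG h_fpc.
have [N [sg [pi [s_act h_act hB]]]] := inG_prefix_form sS hG.
have sgK : involutive sg.
  by move=> u; have := congr1 (prefix N) (sK (pad0 u)); rewrite !s_act !prefix_act.
have invariant := fpc_commuting_involution_invariant s_act h_act hB h_fpc.
have pi_cases : (forall w, pi w = w) \/ (forall w, pi w = sg w).
  apply: (commuting_invariant_perm sgK) => [w|tau tauJ w].
    exact: fpc_perm_fixes_or_swaps s_act sgK h_act h_fpc w.
  exact: (invariant tau tauJ w).1.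
have hs : (forall x, gs h x = x) \/ (forall x, gs h x = s x).
  case: pi_cases => [pi1|pisg]; [left|right] => x; rewrite h_act.
    by rewrite (eq_act_prefix _ pi1) act_prefix_id.
  by rewrite s_act (eq_act_prefix _ pisg).
have hA_fix x y : (s x = x <-> s y = y) -> gA h x = gA h y.
  move=> xy; rewrite (@hB x (pad0 (prefix N x))) ?prefix_pad0 //.
  rewrite (@hB y (pad0 (prefix N y))) ?prefix_pad0 //.
  apply: (commuting_invariant_fun sgK (B := fun w => gA h (pad0 w))).
    by move=> tau tauJ w; exact: (invariant tau tauJ w).2.
  by apply/idP/idP => /eqP/act_prefix_fixed; rewrite -!s_act => /xy;
    rewrite s_act => /act_prefix_fixed/eqP.
have [b0 hA] := supp_two_valued sx0 hA_fix.
exact: Geq_supp_cases hs hA.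
Qed.

Theorem proposition3p4 (s : X -> X) :
  in_S2inf s ->
  (forall x, s (s x) = x) ->
  (exists x, s x <> x) ->
  forall h : Gelt, inG h ->
    (fpc (gperm s) h <->
       Geq h gone \/ Geq h (gperm s) \/ Geq h (gfun (supp s)) \/
       Geq h (gmul (gperm s) (gfun (supp s)))).
Proof.
move=> sS sK s_ne h hG; split; [exact: fpc_supp_cases | exact: fpc_of_supp_cases].
Qed.
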